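(* There exist constants $A,B>0$ such that for all $k\in\mathbb{N}$ and all $a\geq1$, $\mathbf{T}^{(\infty,a-)}_{k+1}\leq A\rho_\infty^k\exp(-Bk/a)$.
   Context: $\mathbf{T}^{(\infty,a-)}_{n}$ denotes the number of rooted unordered trees with $n$ vertices (no constraint on degrees) all of whose subtrees rooted at the children of the root have at most $a$ vertices. By Otter's theorem, the number of rooted unordered trees with $n$ vertices is asymptotic to $\kappa_\infty\rho_\infty^nn^{-3/2}$ for constants $\kappa_\infty>0$, $\rho_\infty>1$. *)

From mathcomp Require Import ssreflect ssrfun ssrbool eqtype ssrnat seq choice path.
From Stdlib Require Import Reals.

Set Implicit Arguments.
Unset Strict Implicit.

(* Rooted (plane) trees are represented as GenTree.tree unit built only from
   the constructor [GenTree.Node 0]; a vertex is a node, its children are the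
   list of subtrees.  Children are normalised by sorting
   along the lexicographic order of their parenthesis codes. *)
Definition rtree := GenTree.tree unit.
Definition rnode (s : seq rtree) : rtree := GenTree.Node 0 s.

Fixpoint nv (t : rtree) : nat :=
  match t with
  | GenTree.Leaf _ => 1
  | GenTree.Node _ s => (sumn (map nv s)).+1
  end.

Definition children (t : rtree) : seq rtree :=
  match t with GenTree.Leaf _ => [::] | GenTree.Node _ s => s end.

(* parenthesis (DFS) code of a tree; injective on trees built from [rnode] *)
Fixpoint tcode (t : rtree) : seq bool :=
  match t with
  | GenTree.Leaf _ => [:: false; true]
  | GenTree.Node _ s => true :: flatten (map tcode s) ++ [:: false]
  end.

Fixpoint lexle (u v : seq bool) : bool :=
  match u, v with
  | [::], _ => true
  | _ :: _, [::] => false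
  | x :: u', y :: v' => if x == y then lexle u' v' else (~~ x) && y
  end.

(* canonical representative of the isomorphism class of unordered rooted
   trees: recursively sort the children *)
Fixpoint canon (t : rtree) : rtree :=
  match t with
  | GenTree.Leaf x => GenTree.Leaf x
  | GenTree.Node n s =>
      GenTree.Node n (sort (fun x y => lexle (tcode x) (tcode y)) (map canon s))
  end.

(* forests fuel k : all ordered sequences of plane trees with k vertices in
   total (correct when fuel >= k) *)
Fixpoint forests (fuel k : nat) : seq (seq rtree) :=
  match fuel with
  | 0 => if k == 0 then [:: [::]] else [::]
  | fuel'.+1 =>
      if k is 0 then [:: [::]] else
      flatten [seq [seq rnode f :: g | f <- forests fuel' i,
                                       g <- forests fuel' (k - i.+1)]
              | i <- iota 0 k]
  end.

Definition plane_trees (n : nat) : seq rtree :=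
  if n is n'.+1 then map rnode (forests n' n') else [::].

Definition T_inf (n : nat) : nat := size (undup (map canon (plane_trees n))).

(* T^{(infty, a-)}_n : number of rooted unordered trees with n vertices all of
   whose subtrees rooted at the children of the root have at most a vertices *)
Definition small_children (a : R) (t : rtree) : bool :=
  all (fun c => if Rle_dec (INR (nv c)) a then true else false) (children t).

Definition T_inf_a (a : R) (n : nat) : nat :=
  size (undup (map canon [seq t <- plane_trees n | small_children a t])).

From Stdlib Require Import Reals Lra.
From Coquelicot Require Import Coquelicot.
From mathcomp Require Import ssreflect ssrfun ssrbool eqtype ssrnat seq choice path.
From mathcomp Require Import zify.

(* Take a tree counted by T^(a-)_(k+1) with k >= M >= a and cut its (sorted) list of root
   children after the shortest prefix whose total size reaches M.  Since every child has at
   most a <= M vertices, the prefix has some size j in [M, 2M), and the cut is injective: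
     T^(a-)_(k+1) <= sum_(M <= j < 2M) T_(j+1) * T^(a-)_(k+1-j).
   Otter's asymptotics give T_n <= D rho^n and sum_(M <= j < 2M) T_(j+1) / rho^j = O(M^(-1/2)),
   which is <= 1/2 once M >= L, and by induction on k the inequality then yields
   T^(a-)_(k+1) <= 2 D rho^(k+1) 2^(-k/(2M)).  Choosing M between max(L, a) and 2La gives
   the claim with B = ln 2 / (4L). *)

Set Implicit Arguments.
Unset Strict Implicit.

Local Open Scope nat_scope.

Lemma rtree_ind (P : rtree -> Prop) :
  (forall x, P (GenTree.Leaf x)) ->
  (forall n (s : seq rtree), {in s, forall c, P c} -> P (GenTree.Node n s)) ->
  forall t, P t.
Proof.
move=> PL PN; fix IH 1 => -[x | n s]; first exact: PL.
apply: PN; elim: s => [d | c s IHs d]; first by rewrite in_nil => nin; discriminate nin.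
by rewrite inE => /orP[/eqP -> | /IHs]; [exact: IH | ].
Qed.

Lemma lexle_total : total lexle.
Proof. by elim=> [|x u IH] [|y v] //=; rewrite ?orbT //; case: x y => [] [] /=. Qed.

Lemma lexle_trans : transitive lexle.
Proof.
move=> v u; elim: u v => [|x u IH] [|y v] [|z w] //=.
by case: x y z => [] [] [] //=; apply: IH.
Qed.

Definition code_le (x y : rtree) := lexle (tcode x) (tcode y).

Lemma code_le_total : total code_le. Proof. by move=> x y; apply: lexle_total. Qed.
Lemma code_le_trans : transitive code_le. Proof. by move=> x y z; apply: lexle_trans. Qed.

Lemma canon_idem t : canon (canon t) = canon t.
Proof.
elim/rtree_ind: t => [x | n s IH] //=; congr GenTree.Node.
have -> : map canon (sort code_le (map canon s)) = sort code_le (map canon s).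
  by apply: map_id_in => t; rewrite mem_sort => /mapP[c cs ->]; rewrite IH.
by apply: sorted_sort; [exact: code_le_trans | exact: sort_sorted code_le_total _].
Qed.

Lemma nv_canon t : nv (canon t) = nv t.
Proof.
elim/rtree_ind: t => [x | n s IH] //=; congr S.
rewrite (perm_sumn (perm_map nv (permEl (perm_sort code_le _)))) -map_comp.
by congr sumn; apply/eq_in_map => c /IH.
Qed.

Fixpoint wf_rtree (t : rtree) : bool :=
  match t with GenTree.Leaf _ => false | GenTree.Node n s => (n == 0)%N && all wf_rtree s end.

Lemma wf_canon t : wf_rtree (canon t) = wf_rtree t.
Proof.
elim/rtree_ind: t => [x | n s IH] //=; congr andb.
rewrite (perm_all _ (permEl (perm_sort code_le _))) all_map.
by apply: eq_in_all => c /IH.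
Qed.

Lemma small_children_canon a t : small_children a (canon t) = small_children a t.
Proof.
case: t => // n s; rewrite /small_children /=.
rewrite (perm_all _ (permEl (perm_sort code_le _))) all_map.
by apply: eq_all => c /=; rewrite nv_canon.
Qed.

Lemma wf_rtreeE t : wf_rtree t -> t = rnode (children t).
Proof. by case: t => [//|n cs] /andP[/eqP -> _]. Qed.

Lemma sumn_nv_eq0 f : sumn (map nv f) = 0 -> f = [::].
Proof. by case: f => //= -[]. Qed.

Lemma forests_sound fuel k f :
  f \in forests fuel k -> all wf_rtree f && (sumn (map nv f) == k).
Proof.
elim: fuel k f => [|fuel IH] k f /=.
  by case: (k == 0) /eqP => [->|_]; rewrite ?inE // => /eqP ->.
case: k => [|k]; first by rewrite inE => /eqP ->.
move=> /flatten_mapP[i]; rewrite mem_iota /= => ilt.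
move=> /allpairsP[[f0 g] [/= /IH/andP[wf0 /eqP sf0] /IH/andP[wg /eqP sg] ->]].
by rewrite /= wf0 wg sf0 sg subnKC // eqxx.
Qed.

Lemma forests_S fuel k : forests fuel.+1 k.+1 =
  flatten [seq [seq rnode f :: g | f <- forests fuel i, g <- forests fuel (k.+1 - i.+1)]
          | i <- iota 0 k.+1].
Proof. by []. Qed.

Lemma forests_complete fuel k f :
  all wf_rtree f -> sumn (map nv f) = k -> k <= fuel -> f \in forests fuel k.
Proof.
elim: fuel k f => [|fuel IH] k f wff sf.
  by rewrite leqn0 => /eqP k0; move: sf; rewrite k0 => /sumn_nv_eq0 ->.
case: k sf => [|k] sf kle; first by move/sumn_nv_eq0: sf => ->; rewrite inE.
case: f wff sf => [//|[//|n f0] g] /andP[/andP[/eqP-> wf0] wg] sf.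
rewrite /= in sf; rewrite forests_S; apply/flatten_mapP; exists (sumn (map nv f0)).
  by rewrite mem_iota; lia.
by apply: (allpairs_f (fun f g => rnode f :: g)); apply: IH => //; lia.
Qed.

Lemma mem_plane_trees n t : (t \in plane_trees n) = wf_rtree t && (nv t == n).
Proof.
apply/idP/idP.
  case: n => [//|n] /mapP[f /forests_sound/andP[w /eqP s] ->].
  by rewrite /= w s eqxx.
case: t => [//|m f] /andP[/andP[/eqP-> w] /eqP <-] /=.
by apply: map_f; apply: forests_complete.
Qed.

Definition unordered_trees n := undup (map canon (plane_trees n)).

Definition small_unordered_trees a n :=
  undup (map canon [seq t <- plane_trees n | small_children a t]).

Lemma mem_unordered_trees n x :
  (x \in unordered_trees n) = [&& wf_rtree x, nv x == n & canon x == x].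
Proof.
rewrite mem_undup; apply/mapP/idP => [[t] | /and3P[w /eqP <- /eqP cx]].
  by rewrite mem_plane_trees => /andP[w /eqP <-] ->; rewrite wf_canon nv_canon canon_idem w !eqxx.
by exists x; rewrite ?mem_plane_trees ?w ?eqxx.
Qed.

Lemma mem_small_unordered_trees a n x :
  (x \in small_unordered_trees a n) =
  [&& wf_rtree x, nv x == n, canon x == x & small_children a x].
Proof.
rewrite mem_undup; apply/mapP/idP => [[t] | /and4P[w /eqP <- /eqP cx sx]].
  rewrite mem_filter mem_plane_trees => /andP[sm /andP[w /eqP <-]] ->.
  by rewrite wf_canon nv_canon canon_idem small_children_canon w sm !eqxx.
by exists x; rewrite ?mem_filter ?mem_plane_trees ?w ?sx ?eqxx.
Qed.

Lemma T_inf_a_le a n : T_inf_a a n <= T_inf n.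
Proof.
apply: uniq_leq_size; first exact: undup_uniq.
move=> x; rewrite -/(small_unordered_trees a n) -/(unordered_trees n).
by rewrite mem_small_unordered_trees mem_unordered_trees => /and4P[-> -> -> _].
Qed.

Lemma canon_rnodeP cs :
  reflect ({in cs, forall c, canon c = c} /\ sorted code_le cs) (canon (rnode cs) == rnode cs).
Proof.
apply: (iffP eqP) => [[E] | [cc scs]].
  split; last by rewrite -E; apply: sort_sorted code_le_total _.
  by move=> c; rewrite -E mem_sort => /mapP[c' _ ->]; apply: canon_idem.
by rewrite /rnode /= (map_id_in cc) sorted_sort //; apply: code_le_trans.
Qed.

Lemma canon_rnode_subseq s cs : subseq s cs ->
  canon (rnode cs) = rnode cs -> canon (rnode s) = rnode s.
Proof.
move=> ss /eqP/canon_rnodeP[cc scs]; apply/eqP/canon_rnodeP; split.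
  by move=> c /(mem_subseq ss)/cc.
exact: (subseq_sorted code_le_trans ss scs).
Qed.

Lemma small_children_le a M t :
  (a <= INR M)%R -> small_children a t -> all (fun n => n <= M) (map nv (children t)).
Proof.
move=> aM /allP sm; rewrite all_map; apply/allP => c /sm.
by case: Rle_dec => // ca _; apply/leP/INR_le/(Rle_trans _ _ _ ca aM).
Qed.

Fixpoint cut_index (M acc : nat) (s : seq nat) : nat :=
  if s is x :: s' then
    if M <= acc + x then 1 else (cut_index M (acc + x) s').+1
  else 0.

Lemma cut_index_window M acc (s : seq nat) : acc < M -> M <= acc + sumn s ->
  all (fun x => x <= M) s -> M <= acc + sumn (take (cut_index M acc s) s) < M + M.
Proof.
elim: s acc => [|x s IH] acc /=; first by lia.
move=> accM Msum /andP[xM sM]; case: ifP => Mx /=; first by rewrite take0 /=; lia.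
by rewrite addnA; apply: IH; rewrite -?addnA //; lia.
Qed.

Definition split_root (M : nat) (t : rtree) : rtree * rtree :=
  let cs := children t in
  let i := cut_index M 0 (map nv cs) in (rnode (take i cs), rnode (drop i cs)).

Lemma split_root_inj M t1 t2 : wf_rtree t1 -> wf_rtree t2 ->
  split_root M t1 = split_root M t2 -> t1 = t2.
Proof.
move=> /wf_rtreeE-> /wf_rtreeE-> [E1 E2].
set i1 := cut_index M 0 (map nv (children t1)).
by rewrite -(cat_take_drop i1 (children t1)) E1 E2 cat_take_drop.
Qed.

Lemma split_root_mem a M k t : 0 < M -> (a <= INR M)%R -> M <= k ->
  t \in small_unordered_trees a k.+1 ->
  split_root M t \in flatten [seq [seq (u, v) | u <- unordered_trees j.+1,
                                            v <- small_unordered_trees a (k.+1 - j)]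
                            | j <- iota M M].
Proof.
move=> M0 aM Mk; rewrite mem_small_unordered_trees.
case: t => [//|n cs] /and4P[/andP[/eqP-> wcs] /eqP[nt] /eqP cx sm].
rewrite /split_root /=.
have /andP[Mj jM] := cut_index_window M0 (leq_trans Mk (eq_leq (esym nt)))
  (small_children_le aM sm).
rewrite add0n -map_take in Mj jM.
set i := cut_index M 0 (map nv cs) in Mj jM *.
set j := sumn (map nv (take i cs)) in Mj jM *.
have kE : k = j + sumn (map nv (drop i cs)).
  by rewrite -nt -sumn_cat -map_cat cat_take_drop.
apply/flatten_mapP; exists j; first by rewrite mem_iota Mj.
apply: (allpairs_f pair); rewrite ?mem_unordered_trees ?mem_small_unordered_trees.
- apply/and3P; split; last exact/eqP/(canon_rnode_subseq (take_subseq cs i)).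
    by apply/allP => c /mem_take/(allP wcs).
  by rewrite /= -/j.
- apply/and4P; split; last 2 first.
  + exact/eqP/(canon_rnode_subseq (drop_subseq cs i)).
  + by apply/allP => c /mem_drop/(allP sm).
  + by apply/allP => c /mem_drop/(allP wcs).
  by apply/eqP; rewrite /= kE -addnS addKn.
Qed.

Lemma T_inf_a_split a M k : 0 < M -> (a <= INR M)%R -> M <= k ->
  T_inf_a a k.+1 <= sumn [seq T_inf j.+1 * T_inf_a a (k.+1 - j) | j <- iota M M].
Proof.
move=> M0 aM Mk.
set P := flatten [seq [seq (u, v) | u <- unordered_trees j.+1,
                                  v <- small_unordered_trees a (k.+1 - j)] | j <- iota M M].
have -> : sumn [seq T_inf j.+1 * T_inf_a a (k.+1 - j) | j <- iota M M] = size P.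
  rewrite size_flatten /shape -map_comp; congr sumn.
  by apply: eq_map => j /=; rewrite size_allpairs.
rewrite -[T_inf_a a k.+1](size_map (split_root M) (small_unordered_trees a k.+1)).
apply: uniq_leq_size.
  rewrite map_inj_in_uniq; first exact: undup_uniq.
  move=> t1 t2; rewrite !mem_small_unordered_trees => /and4P[w1 _ _ _] /and4P[w2 _ _ _].
  exact: split_root_inj.
by move=> _ /mapP[t tin ->]; apply: split_root_mem.
Qed.

Local Open Scope R_scope.

Definition sumR (s : seq R) : R := foldr Rplus 0 s.

Lemma INR_sumn (s : seq nat) : INR (sumn s) = sumR (map INR s).
Proof. by elim: s => //= n s IH; rewrite plus_INR IH. Qed.

Lemma sumR_le (T : eqType) (s : seq T) (f g : T -> R) :
  (forall x, x \in s -> f x <= g x) -> sumR (map f s) <= sumR (map g s).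
Proof.
elim: s => [|x s IH] fg /=; first lra.
have := fg x (mem_head x s); have := IH (fun y ys => fg y (mem_behead (s := x :: s) ys)); lra.
Qed.

Lemma sumR_mulr (T : Type) (s : seq T) (f : T -> R) c :
  sumR [seq f x * c | x <- s] = sumR (map f s) * c.
Proof. by rewrite /sumR; elim: s => /= [|x s ->]; ring. Qed.

Lemma sumR_const (T : Type) (s : seq T) b : sumR [seq b | _ <- s] = INR (size s) * b.
Proof.
elim: s => [|x s IH]; first by rewrite /= Rmult_0_l.
by rewrite (S_INR (size s)) [sumR _]/= IH; ring.
Qed.

(* [U 0 = 0] accounts for the terms with j > k, where [k.+1 - j] truncates to 0. *)
Lemma window_recursion_decay (T U : nat -> R) (rho c C : R) (M : nat) :
  0 < rho -> 0 <= C -> (0 < M)%N -> U 0%N = 0 -> (forall n, 0 <= T n) ->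
  (forall k, (k < M)%N -> U k.+1 <= C * rho ^ k * exp (- c * INR k)) ->
  (forall k, (M <= k)%N -> U k.+1 <= sumR [seq T j.+1 * U (k.+1 - j)%N | j <- iota M M]) ->
  sumR [seq T j.+1 / rho ^ j * exp (c * INR j) | j <- iota M M] <= 1 ->
  forall k, U k.+1 <= C * rho ^ k * exp (- c * INR k).
Proof.
move=> rho0 C0 M0 U0 T0 base split sum1 k.
elim/ltn_ind: k => k IH; case: (ltnP k M) => [/base // | Mk].
set B := C * rho ^ k * exp (- c * INR k).
have B0 : 0 <= B by apply: Rmult_le_pos; [apply: Rmult_le_pos; [|apply: pow_le]; lra |
  apply: Rlt_le; apply: exp_pos].
apply: Rle_trans (split _ Mk) _; rewrite -[X in _ <= X]Rmult_1_l.
apply: Rle_trans (Rmult_le_compat_r _ _ _ B0 sum1); rewrite -sumR_mulr.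
apply: sumR_le => j; rewrite mem_iota => /andP[Mj _].
have rj : 0 < rho ^ j by apply: pow_lt.
have wj : 0 <= T j.+1 / rho ^ j * exp (c * INR j).
  by apply: Rmult_le_pos; [apply: Rdiv_le_0_compat | apply: Rlt_le; apply: exp_pos].
case: (leqP j k) => [jk | kj]; last first.
  have -> : (k.+1 - j = 0)%N by lia.
  by rewrite U0 Rmult_0_r; apply: Rmult_le_pos.
have -> : (k.+1 - j = (k - j).+1)%N by lia.
have /IH Ukj : (k - j < k)%N by lia.
apply: Rle_trans (Rmult_le_compat_l _ _ _ (T0 _) Ukj) _; right.
have rk : rho ^ k = rho ^ j * rho ^ (k - j) by rewrite -pow_add; congr pow; lia.
rewrite /B rk minus_INR; last by apply/leP.
have -> : - c * (INR k - INR j) = - c * INR k + c * INR j by ring.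
rewrite exp_plus; field; lra.
Qed.

Lemma eventually_le_twice (u d : nat -> R) :
  (forall n, 0 < d n) -> is_lim_seq (fun n => u n / d n) 1 ->
  exists N, forall n, (N <= n)%N -> u n <= 2 * d n.
Proof.
move=> d0 /is_lim_seq_spec /(_ (mkposreal 1 Rlt_0_1)) [N HN].
exists N => n /leP /HN /Rabs_def2 [lt2 _]; rewrite /= in lt2.
have dn := d0 n; apply: Rlt_le; apply/(Rmult_lt_reg_r (/ d n)); first exact: Rinv_0_lt_compat.
by rewrite Rmult_assoc Rinv_r; lra.
Qed.

Lemma finite_upper_bound (g : nat -> R) (N : nat) : exists D, forall n, (n < N)%N -> g n <= D.
Proof.
elim: N => [|N [D HD]]; first by exists 0.
exists (Rmax D (g N)) => n; rewrite ltnS leq_eqVlt => /orP[/eqP -> | /HD gn].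
  exact: Rmax_r.
exact: Rle_trans gn (Rmax_l _ _).
Qed.

Lemma geometric_bound (u : nat -> R) (K rho : R) (N : nat) : 0 < rho ->
  (forall n, (N <= n)%N -> u n <= K * rho ^ n) ->
  exists D, 0 < D /\ forall n, u n <= D * rho ^ n.
Proof.
move=> rho0 uK; have [D0 HD0] := finite_upper_bound (fun n => u n / rho ^ n) N.
set D := Rmax 1 (Rmax K D0).
exists D; split; first by apply: Rlt_le_trans (Rmax_l _ _); lra.
move=> n; have rn : 0 < rho ^ n by apply: pow_lt.
case: (ltnP n N) => [/HD0 un | /uK un].
  have -> : u n = u n / rho ^ n * rho ^ n by field; lra.
  apply: Rmult_le_compat_r; first lra.
  exact: Rle_trans un (Rle_trans _ _ _ (Rmax_r _ _) (Rmax_r _ _)).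
apply: Rle_trans un _; apply: Rmult_le_compat_r; first lra.
exact: Rle_trans (Rmax_l _ _) (Rmax_r _ _).
Qed.

Lemma Rpower_le1 x y : 1 <= x -> y <= 0 -> Rpower x y <= 1.
Proof. by move=> x1 y0; rewrite -(Rpower_O x); [apply: Rle_Rpower | lra]. Qed.

Lemma Rpower_decr x y c : 0 < x <= y -> c <= 0 -> Rpower y c <= Rpower x c.
Proof.
move=> xy c0; have -> : c = - (- c) by ring.
rewrite (Rpower_Ropp y) (Rpower_Ropp x); apply: Rinv_le_contravar.
  by rewrite /Rpower; apply: exp_pos.
by apply: Rle_Rpower_l; lra.
Qed.

Lemma mul_Rpower_m3_2 x : 0 < x -> x * Rpower x (-3/2) = / sqrt x.
Proof.
move=> x0; rewrite -{1}(Rpower_1 x) // -Rpower_plus -Rpower_sqrt // -Rpower_Ropp.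
by congr Rpower; field.
Qed.

Lemma window_sum_small (u : nat -> R) (K rho : R) (N : nat) : 0 <= K -> 0 < rho ->
  (forall n, (N <= n)%N -> u n <= K * rho ^ n * Rpower (INR n) (-3/2)) ->
  exists L, (0 < L)%N /\
    forall M, (L <= M)%N -> sumR [seq u j.+1 / rho ^ j | j <- iota M M] <= 1/2.
Proof.
move=> K0 rho0 uK; have [L0 HL0] := INR_unbounded ((2 * K * rho) ^ 2).
exists (maxn L0 (maxn N 1)); split; first by lia.
move=> M; rewrite !geq_max => /and3P[L0M NM M1].
have HM : 1 <= INR M by apply: (le_INR 1); apply/leP.
have sM : 2 * K * rho <= sqrt (INR M).
  rewrite -(sqrt_pow2 (2 * K * rho)); last by apply: Rmult_le_pos; lra.
  by apply: sqrt_le_1_alt; apply: Rlt_le; apply: Rlt_le_trans HL0 _; apply: le_INR; apply/leP.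
apply: (Rle_trans _ (sumR [seq K * rho * Rpower (INR M) (-3/2) | _ <- iota M M])).
  apply: sumR_le => j; rewrite mem_iota => /andP[Mj _].
  have rj : 0 < rho ^ j by apply: pow_lt.
  apply/(Rmult_le_reg_r (rho ^ j)) => //; rewrite /Rdiv Rmult_assoc Rinv_l ?Rmult_1_r; last lra.
  apply: Rle_trans (uK j.+1 _) _; first by lia.
  have decr : Rpower (INR j.+1) (-3/2) <= Rpower (INR M) (-3/2).
    by apply: Rpower_decr; [split; [lra | apply: le_INR; apply/leP; lia] | lra].
  have : 0 <= K * rho * rho ^ j by apply: Rmult_le_pos; [apply: Rmult_le_pos|]; lra.
  rewrite [rho ^ j.+1]/=; nra.
rewrite sumR_const size_iota.
have -> : INR M * (K * rho * Rpower (INR M) (-3/2)) = K * rho * / sqrt (INR M).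
  by rewrite -mul_Rpower_m3_2; [ring | lra].
have sM0 : 0 < sqrt (INR M) by apply: sqrt_lt_R0; lra.
apply/(Rmult_le_reg_r (sqrt (INR M))) => //; rewrite Rmult_assoc Rinv_l; lra.
Qed.

Lemma exp_le x y : x <= y -> exp x <= exp y.
Proof. by case/Rle_lt_or_eq_dec => [/exp_increasing | ->]; lra. Qed.

Lemma exp_window_le2 (M j : nat) : (0 < M)%N -> (j < M + M)%N ->
  exp (ln 2 / (2 * INR M) * INR j) <= 2.
Proof.
move=> M0 jM; have l2 := ln_lt_2.
have HM : 0 < INR M by apply: lt_0_INR; apply/ltP.
have Hj : INR j <= 2 * INR M.
  by rewrite -[2]/(INR 2) -mult_INR; apply: le_INR; apply/leP; lia.
rewrite -[X in _ <= X](exp_ln 2); last lra.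
apply: exp_le; have -> : ln 2 / (2 * INR M) * INR j = ln 2 * INR j / (2 * INR M).
  by field; lra.
apply/Rle_div_l; first lra.
have : 0 <= ln 2 * (2 * INR M - INR j) by apply: Rmult_le_pos; lra.
nra.
Qed.

Lemma T_inf_a_window_decay (rho D a : R) (M : nat) : 1 < rho -> 0 < D -> (0 < M)%N ->
  a <= INR M -> (forall n, INR (T_inf n) <= D * rho ^ n) ->
  sumR [seq INR (T_inf j.+1) / rho ^ j | j <- iota M M] <= 1/2 ->
  forall k, INR (T_inf_a a k.+1) <=
            2 * D * rho * rho ^ k * exp (- (ln 2 / (2 * INR M)) * INR k).
Proof.
move=> rho1 D0 M0 aM TD Tsum.
have rho0 : 0 < rho by lra.
apply: (@window_recursion_decay (fun n => INR (T_inf n)) (fun n => INR (T_inf_a a n)) rho _ _ M)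
  => //.
- by apply: Rmult_le_pos; lra.
- by move=> n; apply: pos_INR.
- move=> k kM; have rk : 0 < rho ^ k by apply: pow_lt.
  have e2 := exp_window_le2 M0 (ltn_addr M kM).
  have ek : / 2 <= exp (- (ln 2 / (2 * INR M)) * INR k).
    rewrite Ropp_mult_distr_l_reverse exp_Ropp.
    apply: Rinv_le_contravar => //; exact: exp_pos.
  apply: Rle_trans (le_INR _ _ (leP (T_inf_a_le a k.+1))) _.
  apply: Rle_trans (TD _) _; rewrite [rho ^ k.+1]/=.
  have : 0 <= D * rho * rho ^ k by apply: Rmult_le_pos; [apply: Rmult_le_pos|]; lra.
  nra.
- move=> k Mk; apply: Rle_trans (le_INR _ _ (leP (T_inf_a_split M0 aM Mk))) _.
  by rewrite INR_sumn -map_comp; right; apply: congr1; apply: eq_map => j /=; rewrite mult_INR.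
- apply: Rle_trans (sumR_le (g := fun j => INR (T_inf j.+1) / rho ^ j * 2) _) _.
    move=> j; rewrite mem_iota => /andP[_ jM]; apply: Rmult_le_compat_l.
      by apply: Rdiv_le_0_compat; [apply: pos_INR | apply: pow_lt].
    exact: exp_window_le2.
  rewrite sumR_mulr; apply: (Rle_trans _ (1/2 * 2)); last lra.
  by apply: Rmult_le_compat_r; [lra | exact: Tsum].
Qed.

Lemma window_width (L : nat) (a : R) : (0 < L)%N -> 1 <= a ->
  exists M, (L <= M)%N /\ a <= INR M /\ INR M <= 2 * INR L * a.
Proof.
move=> L0 a1; have [m [ma am]] := nfloor_ex a ltac:(lra).
exists (maxn L m.+1); split; first exact: leq_maxl.
have L1 : 1 <= INR L by apply: (le_INR 1); apply/leP.
rewrite -S_INR in am; split.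
  by apply: Rle_trans (Rlt_le _ _ am) _; apply: le_INR; apply/leP; lia.
by case: (leqP L m.+1) => _; rewrite ?S_INR; nra.
Qed.

Lemma T_inf_a_exp_decay (rho D : R) (L : nat) : 1 < rho -> 0 < D -> (0 < L)%N ->
  (forall n, INR (T_inf n) <= D * rho ^ n) ->
  (forall M, (L <= M)%N -> sumR [seq INR (T_inf j.+1) / rho ^ j | j <- iota M M] <= 1/2) ->
  forall k a, 1 <= a ->
  INR (T_inf_a a k.+1) <= 2 * D * rho * rho ^ k * exp (- (ln 2 / (4 * INR L)) * INR k / a).
Proof.
move=> rho1 D0 L0 TD Tsum k a a1; have [M [LM [aM M2a]]] := window_width L0 a1.
apply: Rle_trans (T_inf_a_window_decay rho1 D0 (leq_trans L0 LM) aM TD (Tsum M LM) k) _.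
apply: Rmult_le_compat_l; first by apply: Rmult_le_pos; [nra | apply: pow_le; lra].
apply: exp_le.
have L1 : 1 <= INR L by apply: (le_INR 1); apply/leP.
have inv : / (4 * INR L * a) <= / (2 * INR M) by apply: Rinv_le_contravar; nra.
have lk : 0 <= ln 2 * INR k by apply: Rmult_le_pos; [have := ln_lt_2; lra | apply: pos_INR].
have -> : - (ln 2 / (2 * INR M)) * INR k = - (ln 2 * INR k) * / (2 * INR M) by field; lra.
have -> : - (ln 2 / (4 * INR L)) * INR k / a = - (ln 2 * INR k) * / (4 * INR L * a).
  by field; lra.
nra.
Qed.

Theorem lemma26 (kappa rho : R) :
  0 < kappa -> 1 < rho ->
  is_lim_seq (fun n : nat => INR (T_inf n) /
                 (kappa * rho ^ n * Rpower (INR n) (-3/2))) 1 ->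
  exists A B : R, 0 < A /\ 0 < B /\
    forall (k : nat) (a : R), 1 <= a ->
      INR (T_inf_a a (k + 1)) <= A * rho ^ k * exp (- B * INR k / a).
Proof.
move=> kappa0 rho1 lim; have rho0 : 0 < rho by lra.
have d0 n : 0 < kappa * rho ^ n * Rpower (INR n) (-3/2).
  by apply: Rmult_lt_0_compat; [apply: Rmult_lt_0_compat; [|apply: pow_lt] | apply: exp_pos].
have [N otter] : exists N, forall n, (N <= n)%N ->
    INR (T_inf n) <= 2 * kappa * rho ^ n * Rpower (INR n) (-3/2).
  by have [N HN] := eventually_le_twice d0 lim; exists N => n /HN; rewrite !Rmult_assoc.
have [D [D0 TD]] : exists D, 0 < D /\ forall n, INR (T_inf n) <= D * rho ^ n.
  apply: (geometric_bound (K := 2 * kappa) (N := maxn N 1)) => // n.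
  rewrite geq_max => /andP[/otter Tn n1].
  have : Rpower (INR n) (-3/2) <= 1 by apply: Rpower_le1; [apply: (le_INR 1); apply/leP | lra].
  have : 0 <= kappa * rho ^ n by apply: Rmult_le_pos; [lra | apply: pow_le; lra].
  nra.
have [L [L0 Lsum]] := window_sum_small (Rlt_le _ _ (Rmult_lt_0_compat _ _ Rlt_0_2 kappa0))
  rho0 otter.
have L1 : 1 <= INR L by apply: (le_INR 1); apply/leP.
exists (2 * D * rho), (ln 2 / (4 * INR L)); split; first nra.
split; first by apply: Rdiv_lt_0_compat; [have := ln_lt_2 | ]; lra.
by move=> k a a1; rewrite addn1; apply: T_inf_a_exp_decay.
Qed.
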